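(* Let $n\ge2$, $\kappa\ge1$. The map $\psi:\mathbf S_n\to GL(n\kappa^n,\mathbb R)$ defined by $\psi(\sigma)=P_\sigma\otimes\mathrm{sgn}(\sigma)T_\sigma$ is a group homomorphism, i.e. $\psi(\mu\circ\sigma)=\psi(\mu)\psi(\sigma)$ for all $\mu,\sigma\in\mathbf S_n$; hence $\psi$ is a linear representation of $\mathbf S_n$ on $\mathcal G_{[n;\kappa]}\cong\mathbb R^{n\kappa^n}$.
   Context: $\delta_m^j$ is the $j$-th column of $I_m$, $\mathbf 1_m$ the all-ones column vector of length $m$. For $\sigma\in\mathbf S_n$, $P_\sigma=[\delta_n^{\sigma(1)},\dots,\delta_n^{\sigma(n)}]\in\mathbb R^{n\times n}$. For $i=1,\dots,n$, $\Phi_i=\mathbf 1_{\kappa^{i-1}}^T\otimes I_\kappa\otimes\mathbf 1_{\kappa^{n-i}}^T\in\mathbb R^{\kappa\times\kappa^n}$. The Khatri–Rao product of $A\in\mathbb R^{p\times m}$ and $B\in\mathbb R^{q\times m}$ is $A*B=[\mathrm{Col}_1(A)\otimes\mathrm{Col}_1(B),\dots,\mathrm{Col}_m(A)\otimes\mathrm{Col}_m(B)]$, and $T_\sigma=\Phi_{\sigma^{-1}(1)}*\cdots*\Phi_{\sigma^{-1}(n)}\in\mathbb R^{\kappa^n\times\kappa^n}$. $\mathcal G_{[n;\kappa]}$ (finite games with $n$ players each having $\kappa$ strategies) is identified with $\mathbb R^{n\kappa^n}$ via the structure vector $V_G=[V_1^c,\dots,V_n^c]$, where $c_i(x_1,\dots,x_n)=V_i^c(x_1\otimes\cdots\otimes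 x_n)$ with strategies $j$ identified with $\delta_\kappa^j$. *)

From HB Require Import structures.
From mathcomp Require Import all_boot all_order all_algebra all_fingroup.
From mathcomp Require Import mxtens.
Set Implicit Arguments. Unset Strict Implicit. Unset Printing Implicit Defensive.
Import GRing.Theory Num.Theory.
Local Open Scope ring_scope.

(* Kronecker product: (A *t B) from mathcomp-real-closed's mxtens, with the
   standard index convention  (i1,i2) |-> i1 * m2 + i2. *)

Section Defs.
Variable R : realFieldType.

Definition khatri_rao {p q m : nat} (A : 'M[R]_(p, m)) (B : 'M[R]_(q, m))
  : 'M[R]_(p * q, m) :=
  \matrix_(i, j) (col j A *t col j B) i ord0.

Fixpoint khatri_rao_n (k N m : nat) : ('I_m -> 'M[R]_(k, N)) -> 'M[R]_(k ^ m, N) :=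
  match m return ('I_m -> 'M[R]_(k, N)) -> 'M[R]_(k ^ m, N) with
  | 0 => fun _ => const_mx 1
  | m'.+1 => fun F =>
      castmx (esym (expnS k m'), erefl N)
        (khatri_rao (F ord0) (@khatri_rao_n k N m' (fun i => F (lift ord0 i))))
  end.

Lemma Phi_dim (n kappa : nat) (i : 'I_n) :
  (kappa ^ i * kappa * kappa ^ (n - i.+1) = kappa ^ n)%N.
Proof.
by rewrite -expnSr -expnD subnKC ?ltn_ord.
Qed.

Lemma Phi_dim1 (kappa : nat) : (1 * kappa * 1 = kappa)%N.
Proof. by rewrite mul1n muln1. Qed.

(* Phi_i = 1_{kappa^{i-1}}^T (x) I_kappa (x) 1_{kappa^{n-i}}^T, for the
   0-based index i : 'I_n (paper's index i+1). *)
Definition Phi (n kappa : nat) (i : 'I_n) : 'M[R]_(kappa, kappa ^ n) :=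
  castmx (Phi_dim1 kappa, Phi_dim kappa i)
    ((const_mx 1 : 'M[R]_(1, kappa ^ i)) *t (1%:M : 'M[R]_kappa)
       *t (const_mx 1 : 'M[R]_(1, kappa ^ (n - i.+1)))).

Definition Tmx (n kappa : nat) (s : 'S_n) : 'M[R]_(kappa ^ n) :=
  @khatri_rao_n kappa (kappa ^ n) n (fun k => Phi kappa (s^-1%g k)).

Definition Pmx (n : nat) (s : 'S_n) : 'M[R]_n :=
  \matrix_(i, j) ((i == s j)%:R).

Definition sgn (n : nat) (s : 'S_n) : R := (-1) ^+ odd_perm s.

Definition psi (n kappa : nat) (s : 'S_n) : 'M[R]_(n * kappa ^ n) :=
  Pmx s *t (sgn s *: Tmx kappa s).

End Defs.

From HB Require Import structures.
From mathcomp Require Import all_boot all_order all_algebra all_fingroup.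
From mathcomp Require Import mxtens.
Import GRing.Theory Num.Theory.
Local Open Scope ring_scope.

(* Index the rows and columns of T_sigma by the base-kappa expansions of
   length n of their indices.  The Khatri-Rao product of the Phi_(sigma^-1 t)
   has entry 1 at (r, x) exactly when digit t of r equals digit sigma^-1(t) of
   x for every t, so T_sigma is the matrix of the bijection d |-> d o sigma^-1
   of digit strings.  Matrices of maps compose like the maps, so T is
   multiplicative (contravariantly, as is P_sigma = perm_mx sigma^-1), sgn is a
   character, and the mixed-product rule for the Kronecker product makes psi
   a homomorphism.  Invertibility follows from T_sigma^-1 T_sigma = T_1 = 1. *)

Section FunctionMatrix.
Variables (R : pzRingType) (N : nat) (T : finType) (D : 'I_N -> T).
Hypothesis D_bij : bijective D.

Definition fun_mx (f : T -> T) : 'M[R]_N := \matrix_(r, x) (D r == f (D x))%:R.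

Lemma eq_fun_mx f g : f =1 g -> fun_mx f = fun_mx g.
Proof. by move=> fg; apply/matrixP => r x; rewrite !mxE fg. Qed.

Lemma fun_mxM f g : fun_mx f *m fun_mx g = fun_mx (f \o g).
Proof.
have [D' DK D'K] := D_bij.
apply/matrixP => r x; rewrite !mxE (bigD1 (D' (g (D x)))) //=.
rewrite big1 => [|y y_neq].
  by rewrite !mxE D'K eqxx mulr1 addr0.
rewrite !mxE; case: (D y =P g (D x)) => [Dy | _]; last by rewrite mulr0.
by case/eqP: y_neq; rewrite -Dy DK.
Qed.

Lemma fun_mx_id : fun_mx id = 1%:M.
Proof. by apply/matrixP => r x; rewrite !mxE (bij_eq D_bij). Qed.

End FunctionMatrix.

Arguments fun_mx {R N T} D f.
Arguments fun_mxM {R N T D} D_bij f g.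
Arguments fun_mx_id {R N T D} D_bij.
Arguments eq_fun_mx {R N T D f g}.

Lemma prodr_bool (R : pzSemiRingType) (I : finType) (b : pred I) :
  \prod_i (b i)%:R = [forall i, b i]%:R :> R.
Proof.
have natr_andb : {morph (fun c : bool => c%:R : R) : c d / c && d >-> c * d}.
  by case=> d /=; rewrite ?mul1r ?mul0r.
by rewrite -(big_morph _ natr_andb (erefl (true%:R : R))) big_andE.
Qed.

Section Digits.
Variable k : nat.
Local Notation K := k.+1.

(* Digits are read most significant first, matching the index convention of
   the Kronecker product [A_0 *t (A_1 *t ...)]. *)
Definition digit (m t r : nat) : nat := (r %/ K ^ (m - t.+1) %% K)%N.

Lemma digit_lt m t r : (digit m t r < K)%N.
Proof. exact: ltn_mod. Qed.

Lemma digit0 m r : (r < K ^ m.+1)%N -> digit m.+1 0 r = (r %/ K ^ m)%N.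
Proof.
by move=> r_lt; rewrite /digit subn1 modn_small // ltn_divLR ?expn_gt0 -?expnS.
Qed.

Lemma digitSS m t r : (t < m)%N -> digit m.+1 t.+1 r = digit m t (r %% K ^ m).
Proof.
move=> t_lt; rewrite /digit subSS.
have -> : (K ^ m = K ^ (m - t.+1) * K ^ t.+1)%N by rewrite -expnD subnK.
rewrite divn_modl ?dvdn_mulr // mulKn ?expn_gt0 //.
by rewrite modn_dvdm // expnS dvdn_mulr.
Qed.

Lemma digit_inj {m r r'} : (r < K ^ m)%N -> (r' < K ^ m)%N ->
  (forall t, t < m -> digit m t r = digit m t r')%N -> r = r'.
Proof.
elim: m r r' => [|m IH] r r' r_lt r'_lt eq_rr'.
  by move: r_lt r'_lt; rewrite expn0 !ltnS !leqn0 => /eqP-> /eqP->.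
rewrite (divn_eq r (K ^ m)) (divn_eq r' (K ^ m)) -!digit0 ?eq_rr' //.
congr (_ + _)%N; apply: IH; rewrite ?ltn_mod ?expn_gt0 // => t t_lt.
by rewrite -!digitSS ?eq_rr'.
Qed.

Definition digits m (r : 'I_(K ^ m)) : {ffun 'I_m -> 'I_K} :=
  [ffun t : 'I_m => Ordinal (digit_lt m t r)].

Lemma digits_bij m : bijective (@digits m).
Proof.
apply: inj_card_bij; last by rewrite card_ffun !card_ord.
move=> r r' /ffunP eq_rr'; apply/val_inj.
apply: (digit_inj (ltn_ord r) (ltn_ord r')) => t t_lt.
by have := eq_rr' (Ordinal t_lt); rewrite !ffunE => -[].
Qed.

Definition permute_digits {n} (s : 'S_n) (d : {ffun 'I_n -> 'I_K}) :
  {ffun 'I_n -> 'I_K} := [ffun t => d ((s^-1)%g t)].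

Lemma permute_digitsE n (s : 'S_n) d t : permute_digits s d t = d ((s^-1)%g t).
Proof. exact: ffunE. Qed.

Lemma permute_digitsM n (s u : 'S_n) :
  permute_digits (s * u)%g =1 permute_digits u \o permute_digits s.
Proof.
by move=> d; apply/ffunP => t; rewrite /= !permute_digitsE invMg permM.
Qed.

Lemma permute_digits1 n : permute_digits (1 : 'S_n) =1 id.
Proof. by move=> d; apply/ffunP => t; rewrite permute_digitsE invg1 perm1. Qed.

End Digits.

Arguments digits {k m}.
Arguments permute_digits {k n}.
Arguments digits_bij {k m}.

Section KhatriRaoTensor.
Variables (R : realFieldType) (k : nat).
Local Notation K := k.+1.

Lemma khatri_rao_nE N m (F : 'I_m -> 'M[R]_(K, N)) (r : 'I_(K ^ m)) j :
  khatri_rao_n F r j = \prod_(t < m) F t (digits r t) j.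
Proof.
elim: m F r => [|m IH] F r /=; first by rewrite big_ord0 mxE.
rewrite castmxE mxE /= mxE /= !mxE !cast_ord_id IH big_ord_recl.
congr (F _ _ _ * _); first by apply: val_inj; rewrite /= ffunE /= digit0.
apply: eq_bigr => t _; congr (F _ _ _); apply: val_inj.
by rewrite /= !ffunE /= digitSS.
Qed.

Lemma PhiE n (i : 'I_n) (a : 'I_K) (x : 'I_(K ^ n)) :
  Phi R K i a x = (a == digits x i)%:R.
Proof.
rewrite /Phi castmxE !mxE /= mul1r mulr1 ffunE -val_eqE /=.
by rewrite divn1 modn_small.
Qed.

Lemma TmxE n (s : 'S_n) : Tmx R K s = fun_mx digits (permute_digits s).
Proof.
apply/matrixP => r x; rewrite /Tmx khatri_rao_nE !mxE.
under eq_bigr do rewrite PhiE.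
rewrite prodr_bool; congr ((nat_of_bool _)%:R).
apply/forallP/eqP => [eq_d | -> t]; last by rewrite permute_digitsE.
by apply/ffunP => t; rewrite permute_digitsE; apply/eqP.
Qed.

Lemma TmxM n (s u : 'S_n) : Tmx R K (s * u) = Tmx R K u *m Tmx R K s.
Proof.
by rewrite !TmxE (fun_mxM digits_bij); apply/eq_fun_mx/permute_digitsM.
Qed.

Lemma Tmx1 n : Tmx R K (1 : 'S_n) = 1%:M.
Proof.
by rewrite TmxE (eq_fun_mx (permute_digits1 _ _)) (fun_mx_id digits_bij).
Qed.

Lemma unitmx_Tmx n (s : 'S_n) : Tmx R K s \in unitmx.
Proof. by have := Tmx1 n; rewrite -(mulgV s) TmxM => /mulmx1_unit[]. Qed.

End KhatriRaoTensor.

Section Representation.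
Variable R : realFieldType.

Lemma PmxE n (s : 'S_n) : Pmx R s = perm_mx (s^-1)%g.
Proof. by apply/matrixP => i j; rewrite !mxE (canF_eq (permKV s)). Qed.

Lemma PmxM n (s u : 'S_n) : Pmx R (s * u) = Pmx R u *m Pmx R s.
Proof. by rewrite !PmxE invMg perm_mxM. Qed.

Lemma sgnM n (s u : 'S_n) : sgn R (s * u) = sgn R s * sgn R u.
Proof. by rewrite /sgn odd_permM signr_addb. Qed.

Variable k : nat.
Local Notation K := k.+1.

Lemma psiM n (s u : 'S_n) : psi R K (s * u) = psi R K u *m psi R K s.
Proof.
by rewrite /psi PmxM TmxM tensmx_mul -scalemxAl -scalemxAr scalerA sgnM mulrC.
Qed.

Lemma unitmx_psi n (s : 'S_n) : (0 < n)%N -> psi R K s \in unitmx.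
Proof.
rewrite lt0n => n_neq0.
apply: tensmx_unit; rewrite ?expn_eq0 ?PmxE ?unitmx_perm //.
by rewrite unitmxZ ?unitmx_Tmx // unitfE signr_eq0.
Qed.

End Representation.

Theorem proposition3p18 (R : realFieldType) (n kappa : nat)
    (hn : (2 <= n)%N) (hk : (1 <= kappa)%N) :
  (forall sigma : 'S_n, psi R kappa sigma \in unitmx) /\
  (forall mu sigma : 'S_n,
      psi R kappa (sigma * mu)%g = psi R kappa mu *m psi R kappa sigma).
Proof.
case: kappa hk => // k _; split => [sigma | mu sigma]; last exact: psiM.
exact/unitmx_psi/(ltn_trans _ hn).
Qed.
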